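(* Let $k\ge 4$ be an integer, let $G'$ be an acyclic oriented graph with no directed path with $k$ arcs, and let $W$ be an oriented path in $G'$. Then: (1) if $W$ has exactly $kn$ arcs for some positive integer $n$, then $|W^+|\le (k-1)n$ and $|W^-|\ge n$; (2) if the final arc of $W$ is a backward arc, then there is a positive integer $n$ such that $|W^+|\le (k-1)n$ and $|W^-|\ge n$.
   Context: An oriented path $W=w_1w_2\cdots w_t$ in $G'$ is a path in the underlying graph of $G'$ traversed from $w_1$ to $w_t$; an arc of $G'$ between consecutive vertices $w_i,w_{i+1}$ is a forward arc of $W$ if it is $(w_i,w_{i+1})$ and a backward arc if it is $(w_{i+1},w_i)$. $W^+$ and $W^-$ denote the sets of forward and backward arcs of $W$, respectively; the final arc is the one between $w_{t-1}$ and $w_t$. *)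

From mathcomp Require Import all_boot.
Set Implicit Arguments. Unset Strict Implicit. Unset Printing Implicit Defensive.

(* A (finite) digraph is a relation e on a finType T: e x y means arc (x,y). *)

Definition oriented (T : finType) (e : rel T) : Prop :=
  forall x y : T, ~~ (e x y && e y x) /\ ~~ e x x.

Definition acyclic (T : finType) (e : rel T) : Prop :=
  forall (x : T) (s : seq T), path e x s -> ~~ e (last x s) x.

Definition dipath_with_arcs (T : finType) (e : rel T) (k : nat) (x : T) (s : seq T) : Prop :=
  [/\ uniq (x :: s), size s = k & path e x s].

Definition no_dipath_with_arcs (T : finType) (e : rel T) (k : nat) : Prop :=
  forall (x : T) (s : seq T), ~ dipath_with_arcs e k x s.

Definition steps (T : Type) (W : seq T) : seq (T * T) := zip W (behead W).

Definition oriented_path (T : finType) (e : rel T) (W : seq T) : Prop :=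
  [/\ 0 < size W, uniq W & all (fun p => e p.1 p.2 || e p.2 p.1) (steps W)].

Definition n_arcs (T : Type) (W : seq T) : nat := size (steps W).

Definition n_forward (T : finType) (e : rel T) (W : seq T) : nat :=
  count (fun p => e p.1 p.2) (steps W).
Definition n_backward (T : finType) (e : rel T) (W : seq T) : nat :=
  count (fun p => e p.2 p.1) (steps W).

Definition final_arc_backward (T : finType) (e : rel T) (W : seq T) : Prop :=
  exists (s : seq T) (a b : T), W = rcons (rcons s a) b /\ e b a.

From mathcomp Require Import all_boot zify.

Set Implicit Arguments.
Unset Strict Implicit.
Unset Printing Implicit Defensive.

(* Record the orientation of the arcs of W as a boolean word, [true] for a
   forward arc.  Since W has distinct vertices, k consecutive forward arcs
   would form a directed path with k arcs, so the word has no run of k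
   [true]s.  Any k consecutive letters therefore contain a [false], which
   gives (1); and in a word ending with [false] every [false] is preceded by
   fewer than k [true]s, which gives (2) with n the number of [false]s. *)

Section NoTrueRun.

Variable k : nat.

Lemma count_negb_gt0_of_no_run (f : seq bool) :
  ~~ infix (nseq k true) f -> size f = k -> 0 < count negb f.
Proof.
move=> no_run size_f; rewrite -has_count; apply: contraR no_run => /hasPn all_true.
suff -> : f = nseq k true by apply: infix_refl.
rewrite -size_f; apply/all_pred1P/allP => b /all_true.
by case: b.
Qed.

Lemma count_negb_ge_of_no_run (n : nat) (f : seq bool) :
  ~~ infix (nseq k true) f -> size f = k * n -> n <= count negb f.
Proof.
elim: n f => [|n IHn] f no_run size_f //.
have le_k_f : k <= size f by rewrite size_f mulnS leq_addr.
rewrite -(cat_take_drop k f) count_cat in no_run *.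
have head_false : 0 < count negb (take k f).
  apply: count_negb_gt0_of_no_run; last exact: size_takel.
  by apply: contra no_run; apply: infix_catr.
have : n <= count negb (drop k f).
  apply: IHn; first by apply: contra no_run; apply: infix_catl.
  by rewrite size_drop size_f mulnS addKn.
lia.
Qed.

Lemma no_run_prefix_lt (j : nat) (r : seq bool) :
  ~~ infix (nseq k true) (nseq j true ++ r) -> j < k.
Proof.
apply: contraR; rewrite -leqNgt => /subnKC <-.
by rewrite nseqD -catA prefix_infix.
Qed.

(* The leading run of j [true]s is what makes the induction go through. *)
Lemma count_id_le_of_no_run (j : nat) (g : seq bool) :
  ~~ infix (nseq k true) (nseq j true ++ rcons g false) ->
  j + count id g <= k.-1 * (count negb g).+1.
Proof.
elim: g j => [|[] g IHg] j /= no_run.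
- by have := no_run_prefix_lt no_run; lia.
- by rewrite addnA addn1; apply: IHg; rewrite -addn1 nseqD -catA.
- have lt_j_k := no_run_prefix_lt no_run.
  have : count id g <= k.-1 * (count negb g).+1.
    apply: (IHg 0); apply: contra no_run.
    by move=> /(infix_catl (nseq j true ++ [:: false])); rewrite -catA.
  rewrite add0n mulnS; lia.
Qed.

Lemma count_id_le_of_no_run_rcons_false (g : seq bool) :
  ~~ infix (nseq k true) (rcons g false) ->
  count id (rcons g false) <= k.-1 * count negb (rcons g false).
Proof.
move=> no_run; have := count_id_le_of_no_run (j := 0) no_run.
rewrite -cats1 !count_cat /=; lia.
Qed.

End NoTrueRun.

Section ForwardFlags.

Variables (T : finType) (e : rel T).

Definition forward_flags (W : seq T) : seq bool := [seq e p.1 p.2 | p <- steps W].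

Lemma forward_flags_cons2 (x y : T) (W : seq T) :
  forward_flags [:: x, y & W] = e x y :: forward_flags (y :: W).
Proof. by []. Qed.

Lemma steps_rcons (x : T) (s : seq T) (b : T) :
  steps (rcons (x :: s) b) = rcons (steps (x :: s)) (last x s, b).
Proof. by elim: s x => [|y s IHs] x //; rewrite /steps /= -/(steps _) IHs. Qed.

Lemma forward_flags_rcons2 (s : seq T) (a b : T) :
  forward_flags (rcons (rcons s a) b) = rcons (forward_flags (rcons s a)) (e a b).
Proof.
case: s => [|x s] //.
by rewrite /forward_flags rcons_cons steps_rcons -rcons_cons last_rcons map_rcons.
Qed.

Lemma size_forward_flags (W : seq T) : size (forward_flags W) = n_arcs W.
Proof. exact: size_map. Qed.

Lemma count_forward_flags (W : seq T) : count id (forward_flags W) = n_forward e W.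
Proof. exact: count_map. Qed.

Lemma count_negb_forward_flags_le (W : seq T) :
  all (fun p => e p.1 p.2 || e p.2 p.1) (steps W) ->
  count negb (forward_flags W) <= n_backward e W.
Proof.
move=> /all_filterP linked; rewrite count_map -linked count_filter.
by apply: sub_count => -[x y] /= /andP[/negbTE-> /=].
Qed.

Lemma path_take_of_forward_prefix (n : nat) (x : T) (s : seq T) :
  prefix (nseq n true) (forward_flags (x :: s)) ->
  n <= size s /\ path e x (take n s).
Proof.
elim: n x s => [|n IHn] x [|y s] //; rewrite forward_flags_cons2 prefix_cons /=.
by case/andP=> /eqP <- /IHn [le_n_s path_ys]; split.
Qed.

Lemma no_forward_run (n : nat) (W : seq T) :
  0 < n -> uniq W -> no_dipath_with_arcs e n -> ~~ infix (nseq n true) (forward_flags W).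
Proof.
case: n => // n _ + no_path; elim: W => [|x [|y W] IHW] // /andP[x_notin uW].
rewrite forward_flags_cons2 infix_consl -forward_flags_cons2 negb_or IHW // andbT.
apply/negP => /path_take_of_forward_prefix [le_n_W path_xW].
apply: (no_path x (take n.+1 (y :: W))); split => //; last exact: size_takel.
apply: prefix_uniq (_ : uniq [:: x, y & W]); last by rewrite /= x_notin.
by rewrite prefix_cons eqxx prefix_take.
Qed.

End ForwardFlags.

Theorem lemma2 (k : nat) (T : finType) (e : rel T) (W : seq T) :
  4 <= k ->
  oriented e -> acyclic e -> no_dipath_with_arcs e k ->
  oriented_path e W ->
  (forall n : nat, 0 < n -> n_arcs W = k * n ->
     n_forward e W <= (k - 1) * n /\ n <= n_backward e W) /\
  (final_arc_backward e W ->
     exists n : nat, 0 < n /\ n_forward e W <= (k - 1) * n /\ n <= n_backward e W).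
Proof.
move=> k_ge4 oriented_e _ no_path [_ uW linked].
have no_run := no_forward_run (leq_ltn_trans (leq0n 3) k_ge4) uW no_path.
have backward_ge := count_negb_forward_flags_le linked.
split.
  move=> n _ arcs_W.
  have arcs_split : n_forward e W + count negb (forward_flags e W) = k * n.
    by rewrite -count_forward_flags count_predC size_forward_flags.
  have := count_negb_ge_of_no_run no_run (etrans (size_forward_flags e W) arcs_W).
  rewrite mulnBl mul1n; lia.
case=> s [a [b [W_def e_ba]]].
have [+ _] := oriented_e a b; rewrite e_ba andbT => /negbTE e_ab.
have [g flags_W] : exists g, forward_flags e W = rcons g false.
  by rewrite W_def forward_flags_rcons2 e_ab; eexists.
rewrite flags_W in no_run backward_ge.
exists (count negb (rcons g false)); split; first by rewrite -cats1 count_cat addn1.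
rewrite -count_forward_flags flags_W subn1; split=> //.
exact: count_id_le_of_no_run_rcons_false.
Qed.
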